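(* Let $n\ge 2$, let $A$ be a set of $n$ agents, and let $v$ assign a real value $v(C)$ to every nonempty $C\subseteq A$. Let $S_1,S_2\subseteq\{2,\dots,n\}$ be two coalition size sets, each containing $n$. Suppose that every integer partition of $n$ is reachable from the node $[n]$ in $G_{S_1}$ or in $G_{S_2}$ (i.e., for every integer partition $P$ of $n$ there is $i\in\{1,2\}$ and a directed path from $[n]$ to $P$ in $G_{S_i}$). Then $$\max\big(V^{S_1}(A),\,V^{S_2}(A)\big)\;=\;\max_{\mathcal{CS}\in\Pi(A)}\ \sum_{C\in\mathcal{CS}} v(C),$$ i.e., the CDP procedure run with the pair $(S_1,S_2)$ returns the value of an optimal coalition structure.
   Context: A coalition structure of $A$ is a partition of $A$ into nonempty pairwise disjoint coalitions; $\Pi(A)$ is the set of all coalition structures, and the value of $\mathcal{CS}$ is $\sum_{C\in\mathcal{CS}}v(C)$. Restricted integer partition graph: for a set $S\subseteq\{2,\dots,n\}$, $G_S$ is the directed graph whose nodes are the integer partitions of $n$ (multisets of positive integers summing to $n$), with an edge from $P$ to $P'$ whenever $P'$ is obtained from $P$ by replacing a single part $x$ of $P$ with $x\in S$ by two positive parts $x_1,x_2$ with $x_1+x_2=x$. The node $[n]$ is the partition with one part. Dynamic program with size set $S$: initialize a table $V_t(C)=v(C)$ for every nonempty $C\subseteq A$. Then, for each $s\in S$ in increasing order, for each coalition $C\subseteq A$ with $|C|=s$, and for each unordered pair $\{C_1,C_2\}$ of nonempty disjoint sets with $C_1\cup C_2=C$, set $V_t(C)\leftarrow\max\big(V_t(C),\,V_t(C_1)+V_t(C_2)\big)$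 (using the current table values). Let $V^{S}(A)$ denote the final value of $V_t(A)$ after this procedure. CDP runs this program separately (with fresh tables) for $S_1$ and for $S_2$ and returns the larger of $V^{S_1}(A)$ and $V^{S_2}(A)$. *)

From mathcomp Require Import all_boot all_order all_algebra.
Set Implicit Arguments. Unset Strict Implicit. Unset Printing Implicit Defensive.
Import Order.TTheory GRing.Theory Num.Theory.
Local Open Scope ring_scope.

Definition cs_value (R : realFieldType) (A : finType) (v : {set A} -> R)
  (CS : {set {set A}}) : R := \sum_(C in CS) v C.

(* Subsets of C have
   size < s, so the values they read are not modified during this stage; the
   order in which coalitions of size s are processed is therefore irrelevant.
   Each unordered pair {C1,C2} appears twice as (C1, C :\: C1), which does
   not change a max. *)
Definition dp_stage (R : realFieldType) (A : finType) (s : nat)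
  (V : {set A} -> R) : {set A} -> R :=
  fun C => if #|C| == s then
             \big[Num.max/V C]_(C1 : {set A} | (C1 \proper C) && (C1 != set0))
                (V C1 + V (C :\: C1))
           else V C.

Definition dp_value (R : realFieldType) (A : finType) (S : pred nat)
  (v : {set A} -> R) : R :=
  (foldl (fun V s => if S s then dp_stage s V else V) v
         (iota 0 #|A|.+1)) [set: A].

(* Integer partitions of n: finite multisets of positive integers summing to
   n, represented by sequences (considered up to permutation). *)
Definition int_partition (n : nat) (P : seq nat) : bool :=
  all (fun x => 0 < x)%N P && (sumn P == n).

Definition gS_edge (S : pred nat) (P P' : seq nat) : Prop :=
  exists x x1 x2 : nat,
    [/\ x \in P, S x, (0 < x1)%N, (0 < x2)%N &
        ((x1 + x2 = x)%N /\ perm_eq P' (x1 :: x2 :: rem x P))].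

Inductive gS_reach (S : pred nat) : seq nat -> seq nat -> Prop :=
| gS_reach_refl P : gS_reach S P P
| gS_reach_step P Q P' : gS_reach S P Q -> gS_edge S Q P' -> gS_reach S P P'.

(* Every table entry produced by the dynamic program is the value of
   some partition of its coalition, so CDP never overestimates the optimum.
   Conversely, call a multiset Q of sizes bounded if every family of pairwise
   disjoint coalitions with sizes Q has total final table value at most
   V(A).  The one-block partition [n] is bounded, and boundedness propagates
   along the edges of G_S: if the part x in S of Q is split into x1 + x2, two
   disjoint blocks of sizes x1 and x2 merge into a block of size x, whose
   entry was updated at stage x and so dominates their sum.  Hence the sizes
   of an optimal coalition structure, being reachable in G_S1 or G_S2, give
   a lower bound on one of the two runs. *)
From mathcomp Require Import all_boot all_order all_algebra.
Import Order.TTheory GRing.Theory Num.Theory.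
Local Open Scope ring_scope.
Set Implicit Arguments. Unset Strict Implicit.

Section PairwisePerm.
Variables (T : eqType) (r : rel T).
Hypothesis r_sym : symmetric r.

Lemma pairwise_rot i (s : seq T) : pairwise r (rot i s) = pairwise r s.
Proof.
rewrite -{2}(cat_take_drop i s) /rot !pairwise_cat allrelC.
rewrite [in RHS](andbC (pairwise r _)).
by congr andb; rewrite (@eq_allrel _ _ _ r) // => x y; apply: r_sym.
Qed.

Lemma pairwise_perm (s t : seq T) : perm_eq s t -> pairwise r s = pairwise r t.
Proof.
elim: t s => [|x t IH] s; first by move/perm_nilP->.
case/perm_consP=> i [u [rot_s perm_ut]].
rewrite -(pairwise_rot i) rot_s !pairwise_cons (IH _ perm_ut).
by rewrite (perm_all _ perm_ut).
Qed.

End PairwisePerm.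

Lemma perm_map_consP (T U : eqType) (f : T -> U) (s : seq T) y t :
  perm_eq (map f s) (y :: t) ->
  exists x s', [/\ perm_eq s (x :: s'), f x = y & perm_eq (map f s') t].
Proof.
move=> pst; have /mapP[x xs def_y] : y \in map f s.
  by rewrite (perm_mem pst) mem_head.
exists x, (rem x s); split; rewrite ?def_y //; first exact: perm_to_rem.
rewrite -(perm_cons (f x)) -map_cons -def_y -(permPr pst).
by rewrite perm_map // perm_sym perm_to_rem.
Qed.

Section Partitions.
Variable T : finType.
Implicit Types (P : {set {set T}}) (D : {set T}).

Lemma partitionU P1 P2 D1 D2 : partition P1 D1 -> partition P2 D2 ->
  [disjoint D1 & D2] -> partition (P1 :|: P2) (D1 :|: D2).
Proof.
move=> /and3P[/eqP cov1 ti1 nz1] /and3P[/eqP cov2 ti2 nz2] dD.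
rewrite /partition /cover bigcup_setU -!/(cover _) cov1 cov2 eqxx.
rewrite inE negb_or nz1 nz2.
by rewrite trivIsetU ?cov1 ?cov2.
Qed.

Lemma partition_disjoint P1 P2 D1 D2 : partition P1 D1 -> partition P2 D2 ->
  [disjoint D1 & D2] -> [disjoint P1 & P2].
Proof.
move=> pP1 pP2 dD; apply/pred0P => B /=; apply/negbTE/andP => -[B1 B2].
have /set0Pn[z zB] := partition_neq0 pP1 B1.
have := disjointFr dD (subsetP (partitionS pP1 B1) z zB).
by rewrite (subsetP (partitionS pP2 B2) z zB).
Qed.

Lemma int_partition_blocks P D :
  partition P D -> int_partition #|D| [seq #|B| | B : {set T} <- enum P].
Proof.
move=> pP; apply/andP; split.
  apply/allP => k /mapP[B BP ->].
  by rewrite card_gt0 (partition_neq0 pP) // -mem_enum.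
by rewrite sumnE big_map big_enum (card_partition pP).
Qed.

Lemma cs_valueU (R : realFieldType) (v : {set T} -> R) P1 P2 :
  [disjoint P1 & P2] -> cs_value v (P1 :|: P2) = cs_value v P1 + cs_value v P2.
Proof.
by move=> dP; rewrite /cs_value -bigU //; apply: eq_bigl => B; rewrite inE.
Qed.

End Partitions.

Section DynamicProgram.
Variables (R : realFieldType) (A : finType) (S : pred nat) (v : {set A} -> R).

Definition dp_table k :=
  foldl (fun V s => if S s then dp_stage s V else V) v (iota 0 k).

Lemma dp_tableS k :
  dp_table k.+1 = if S k then dp_stage k (dp_table k) else dp_table k.
Proof. by rewrite /dp_table -addn1 iotaD foldl_cat. Qed.

Lemma dp_table_stable k (C : {set A}) :
  (#|C| < k)%N -> dp_table k C = dp_table #|C|.+1 C.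
Proof.
elim: k => [//|k IH]; rewrite ltnS leq_eqVlt => /orP[/eqP-> //|ltCk].
rewrite dp_tableS -(IH ltCk); case: (S k) => //.
by rewrite /dp_stage (ltn_eqF ltCk).
Qed.

Lemma le_dp_table k (C : {set A}) : v C <= dp_table k C.
Proof.
elim: k => [//|k IH]; rewrite dp_tableS; case: (S k) => //.
rewrite /dp_stage; case: (_ == _) => //.
exact: le_trans IH (bigmax_ge_id _ _ _ _).
Qed.

Lemma dp_table_partition k (C : {set A}) : C != set0 ->
  exists2 P, partition P C & dp_table k C = cs_value v P.
Proof.
elim: k C => [|k IH] C nzC.
  exists [set C]; last by rewrite /cs_value big_set1.
  by rewrite /partition cover1 eqxx trivIset1 inE eq_sym nzC.
rewrite dp_tableS; case: (S k); last exact: IH.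
rewrite /dp_stage; case: (_ == _); last exact: IH.
apply: (big_ind (fun t => exists2 P, partition P C & t = cs_value v P)).
- exact: IH.
- by move=> x y [P1 ? ->] [P2 ? ->]; case: leP => _; [exists P2 | exists P1].
move=> C1 /andP[ltC1C nzC1].
have sC1C := proper_sub ltC1C.
have nzC2 : C :\: C1 != set0 by rewrite setD_eq0 (proper_subn ltC1C).
have dC : [disjoint C1 & C :\: C1].
  by rewrite disjoint_sym; case/subsetDP: (subxx (C :\: C1)).
have [P1 pP1 ->] := IH C1 nzC1; have [P2 pP2 ->] := IH _ nzC2.
exists (P1 :|: P2); last by rewrite cs_valueU // (partition_disjoint pP1 pP2).
by rewrite -(setID C C1) (setIidPr sC1C) partitionU.
Qed.

Definition dp_final := dp_table #|A|.+1.

Lemma dp_final_table k (C : {set A}) :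
  (#|C| < k)%N -> (k <= #|A|.+1)%N -> dp_final C = dp_table k C.
Proof.
move=> ltCk lekA; rewrite /dp_final !dp_table_stable //.
exact: leq_trans ltCk lekA.
Qed.

Lemma dp_final_merge (C1 C2 : {set A}) : S #|C1 :|: C2| ->
  [disjoint C1 & C2] -> C1 != set0 -> C2 != set0 ->
  dp_final C1 + dp_final C2 <= dp_final (C1 :|: C2).
Proof.
move=> SC dC nzC1 nzC2.
have properU (X Y : {set A}) :
    [disjoint X & Y] -> Y != set0 -> X \proper X :|: Y.
  move=> dXY nzY; rewrite properUl //; apply: contraNN nzY => sYX.
  by rewrite -subset0 -(setICr X) subsetI sYX -disjoints_subset disjoint_sym.
have ltC1C := proper_card (properU _ _ dC nzC2).
have ltC2C : (#|C2| < #|C1 :|: C2|)%N.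
  by rewrite setUC proper_card // properU // disjoint_sym.
have leCA : (#|C1 :|: C2| <= #|A|)%N := max_card _.
rewrite (dp_final_table ltC1C) ?(dp_final_table ltC2C)
  ?(dp_final_table (ltnSn _)) ?ltnS ?(leqW leCA) //.
have CDC1 : (C1 :|: C2) :\: C1 = C2.
  by rewrite setDUl setDv set0U; apply/setDidPl; rewrite disjoint_sym.
rewrite dp_tableS SC /dp_stage eqxx (bigD1 C1) ?properU //=.
by rewrite CDC1 le_max lexx.
Qed.

Local Notation disj := [rel X Y : {set A} | [disjoint X & Y]].

Definition dp_bounded (Q : seq nat) := forall s : seq {set A},
  pairwise disj s -> perm_eq [seq #|C| | C : {set A} <- s] Q ->
  \sum_(C <- s) dp_final C <= dp_final [set: A].

Lemma dp_bounded_whole : dp_bounded [:: #|A|].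
Proof.
move=> s _ /perm_map_consP[C [s' [perm_s cardC /perm_size]]].
rewrite size_map => /size0nil s'0; rewrite (perm_big _ perm_s) s'0 big_seq1.
suff -> : C = [set: A] by [].
by apply/eqP; rewrite eqEcard subsetT cardsT cardC /=.
Qed.

Lemma dp_bounded_edge Q Q' : gS_edge S Q Q' -> dp_bounded Q -> dp_bounded Q'.
Proof.
move=> [x [x1 [x2 [xQ Sx x1_gt0 x2_gt0 [x12 permQ']]]]] boundQ s disj_s perm_s.
have /perm_map_consP[C1 [s1 [perm_s1 cardC1]]] := perm_trans perm_s permQ'.
case/perm_map_consP=> C2 [s2 [perm_s2 cardC2 perm_s2Q]].
have perm_s12 : perm_eq s [:: C1, C2 & s2].
  by rewrite (permPl perm_s1) perm_cons.
move: disj_s; rewrite (pairwise_perm _ perm_s12) => [|X Y]; last first.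
  exact: disjoint_sym.
rewrite /= => /and3P[/andP[dC12 dC1s2] dC2s2 disj_s2].
have nzC1 : C1 != set0 by rewrite -card_gt0 cardC1.
have nzC2 : C2 != set0 by rewrite -card_gt0 cardC2.
have cardC12 : #|C1 :|: C2| = x.
  by rewrite cardsU (disjoint_setI0 dC12) cards0 subn0 cardC1 cardC2.
rewrite (perm_big _ perm_s12) /= !big_cons addrA.
apply: le_trans (boundQ ((C1 :|: C2) :: s2) _ _); last first.
- by rewrite /= cardC12 (permPr (perm_to_rem xQ)) perm_cons.
- rewrite /= disj_s2 andbT; apply/allP => D Ds2.
  have /= dC1D := allP dC1s2 D Ds2; have /= dC2D := allP dC2s2 D Ds2.
  by rewrite /= -setI_eq0 setIUl setU_eq0 !setI_eq0 dC1D dC2D.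
by rewrite big_cons lerD2r dp_final_merge ?cardC12.
Qed.

Lemma dp_bounded_reach Q Q' : gS_reach S Q Q' -> dp_bounded Q -> dp_bounded Q'.
Proof. by elim=> // P Q1 Q2 _ IH edge /IH; apply: dp_bounded_edge. Qed.

Lemma dp_valueE : dp_value S v = dp_final [set: A].
Proof. by []. Qed.

Lemma dp_value_partition : [set: A] != set0 ->
  exists2 P, partition P [set: A] & dp_value S v = cs_value v P.
Proof. exact: dp_table_partition. Qed.

Lemma cs_value_le_dp_value CS : partition CS [set: A] ->
  gS_reach S [:: #|A|] [seq #|C| | C : {set A} <- enum CS] ->
  cs_value v CS <= dp_value S v.
Proof.
move=> pCS /dp_bounded_reach/(_ dp_bounded_whole) boundCS.
rewrite dp_valueE; apply: le_trans (boundCS (enum CS) _ (perm_refl _)).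
  by rewrite /cs_value -big_enum /=; apply: ler_sum => C _; apply: le_dp_table.
have := enum_uniq (mem CS); rewrite uniq_pairwise.
apply: sub_in_pairwise (allss _).
move=> X Y; rewrite !mem_enum /= => XCS YCS.
by move/trivIsetP: (partition_trivIset pCS); apply.
Qed.

End DynamicProgram.

Theorem theorem1 (R : realFieldType) (A : finType) (n : nat)
  (v : {set A} -> R) (S1 S2 : pred nat) :
  (2 <= n)%N -> #|A| = n ->
  (forall s, S1 s -> (2 <= s <= n)%N) -> S1 n ->
  (forall s, S2 s -> (2 <= s <= n)%N) -> S2 n ->
  (forall P : seq nat, int_partition n P ->
     gS_reach S1 [:: n] P \/ gS_reach S2 [:: n] P) ->
  let best := Num.max (dp_value S1 v) (dp_value S2 v) in
  (exists CS : {set {set A}}, partition CS [set: A] /\ cs_value v CS = best) /\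
  (forall CS : {set {set A}}, partition CS [set: A] -> cs_value v CS <= best).
Proof.
move=> n_ge2 cardA _ _ _ _ reach; rewrite /=.
have nzA : [set: A] != set0 by rewrite -card_gt0 cardsT cardA ltnW.
split.
  have [P1 pP1 ->] := dp_value_partition S1 v nzA.
  have [P2 pP2 ->] := dp_value_partition S2 v nzA.
  by case: leP => _; [exists P2 | exists P1].
move=> CS pCS; have := int_partition_blocks pCS.
rewrite cardsT cardA le_max => /reach; rewrite -cardA.
by case=> /(cs_value_le_dp_value v pCS) ->; rewrite ?orbT.
Qed.
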